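(* Let $n,m,q\ge 1$ and $\beta\in[0,1]$. Let $B_0\in\mathbb{R}^{n\times n}$ be symmetric positive definite and $U=B_0^{1/2}$ its symmetric positive definite square root. Let $X_f\in\mathbb{R}^{n\times m}$ and $P_f=X_fX_f^T$. Let $\hat H\in\mathbb{R}^{q\times n}$ be any real matrix, $\hat R\in\mathbb{R}^{q\times q}$ symmetric positive definite, and $K=\hat H^T\hat R^{-1}\hat H$. Let $U_h=\bigl[\sqrt{1-\beta}\,U\ \ \sqrt{\beta}\,X_f\bigr]\in\mathbb{R}^{n\times(n+m)}$ and $S_{P4D}=I_{n+m}+U_h^TKU_h$. Then \[ 1\le \kappa(S_{P4D})\le 1+\bigl[(1-\beta)\lambda_1(B_0)+\beta\lambda_1(P_f)\bigr]\lambda_1(K). \]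
   Context: For a symmetric matrix $A$ of size $k\times k$, $\lambda_j(A)$ denotes its $j$-th largest eigenvalue ($\lambda_1$ largest, $\lambda_k$ smallest); for symmetric positive definite $A$, $\kappa(A)=\lambda_1(A)/\lambda_k(A)$. In the application, $P_f$ is an ensemble covariance with $X_f$ the scaled ensemble perturbation matrix, and $S_{P4D}$ is the Hessian of hybrid 4D-Var preconditioned by the control variable transform $\delta\boldsymbol{x}=U_h\delta\boldsymbol{v}$. *)

From HB Require Import structures.
From mathcomp Require Import all_boot all_order all_algebra.
From mathcomp Require Import classical_sets reals.
Set Implicit Arguments. Unset Strict Implicit. Unset Printing Implicit Defensive.
Import Order.TTheory GRing.Theory Num.Theory.
Local Open Scope ring_scope.
Local Open Scope classical_set_scope.

Definition symmetric_mx (R : realType) (k : nat) (A : 'M[R]_k) : Prop := A^T = A.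

Definition spd_mx (R : realType) (k : nat) (A : 'M[R]_k) : Prop :=
  A^T = A /\ forall x : 'cV[R]_k, x != 0 -> 0 < (x^T *m A *m x) 0 0.

Definition spectrum (R : realType) (k : nat) (A : 'M[R]_k) : set R :=
  [set a | eigenvalue A a].

Definition lambda_max (R : realType) (k : nat) (A : 'M[R]_k) : R := sup (spectrum A).
Definition lambda_min (R : realType) (k : nat) (A : 'M[R]_k) : R := inf (spectrum A).

Definition cond_num (R : realType) (k : nat) (A : 'M[R]_k) : R :=
  lambda_max A / lambda_min A.

(* Vectors are rows, so the quadratic form of A at x is x A x^T.
   A symmetric matrix attains the maximum of its Rayleigh quotient on the
   compact unit sphere, and a maximiser is an eigenvector; hence lambda_max is
   an eigenvalue dominating the Rayleigh quotient.  Since K is positive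
   semidefinite, |x|^2 <= x S x^T <= |x|^2 + lambda_1(K) |x Uh^T|^2.  The last
   norm is controlled by Uh Uh^T = (1 - beta) B0 + beta Pf, whose Rayleigh
   quotient is at most C = (1 - beta) lambda_1(B0) + beta lambda_1(Pf): a top
   eigenvector of Uh^T Uh is mapped by Uh^T to an eigenvector of Uh Uh^T for
   the same eigenvalue, or to 0.  Thus the spectrum of S lies in
   [1, 1 + C lambda_1(K)]. *)

From mathcomp Require Import all_boot all_order all_algebra.
From mathcomp Require Import boolp classical_sets reals topology normedtype derive.
From mathcomp Require Import ring lra.
Set Implicit Arguments. Unset Strict Implicit. Unset Printing Implicit Defensive.
Import Order.TTheory GRing.Theory Num.Theory.
Import numFieldNormedType.Exports.
Local Open Scope ring_scope.
Local Open Scope classical_set_scope.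

Section Rayleigh.
Variable R : realType.

Definition qform k (A : 'M[R]_k) (x : 'rV[R]_k) : R := (x *m A *m x^T) 0 0.
Definition bform k (A : 'M[R]_k) (x y : 'rV[R]_k) : R := (x *m A *m y^T) 0 0.
Definition sqnorm k (x : 'rV[R]_k) : R := (x *m x^T) 0 0.

Lemma sqnorm_qform k (x : 'rV[R]_k) : sqnorm x = qform 1%:M x.
Proof. by rewrite /qform mulmx1. Qed.

Lemma sqnormE k (x : 'rV[R]_k) : sqnorm x = \sum_j x 0 j ^+ 2.
Proof. by rewrite /sqnorm mxE; apply: eq_bigr => j _; rewrite !mxE expr2. Qed.

Lemma sqnorm_ge0 k (x : 'rV[R]_k) : 0 <= sqnorm x.
Proof. by rewrite sqnormE; apply: sumr_ge0 => j _; rewrite sqr_ge0. Qed.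

Lemma sqr_coord_le_sqnorm k (x : 'rV[R]_k) j : x 0 j ^+ 2 <= sqnorm x.
Proof.
by rewrite sqnormE (bigD1 j) //= lerDl; apply: sumr_ge0 => i _; rewrite sqr_ge0.
Qed.

Lemma sqnorm_eq0 k (x : 'rV[R]_k) : (sqnorm x == 0) = (x == 0).
Proof.
apply/eqP/eqP => [x0|->]; last by rewrite /sqnorm mul0mx mxE.
apply/rowP => j; apply/eqP; rewrite mxE -sqrf_eq0 eq_le sqr_ge0 andbT.
by rewrite -x0 sqr_coord_le_sqnorm.
Qed.

Lemma sqnorm_gt0 k (x : 'rV[R]_k) : (0 < sqnorm x) = (x != 0).
Proof. by rewrite lt_def sqnorm_ge0 andbT sqnorm_eq0. Qed.

Lemma qformZr k (A : 'M[R]_k) t x : qform A (t *: x) = t ^+ 2 * qform A x.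
Proof. by rewrite /qform linearZ /= -!scalemxAl -scalemxAr !mxE mulrA -expr2. Qed.

Lemma sqnormZ k t (x : 'rV[R]_k) : sqnorm (t *: x) = t ^+ 2 * sqnorm x.
Proof. by rewrite !sqnorm_qform qformZr. Qed.

Lemma qformDl k (A B : 'M[R]_k) x : qform (A + B) x = qform A x + qform B x.
Proof. by rewrite /qform mulmxDr mulmxDl mxE. Qed.

Lemma qformZl k a (A : 'M[R]_k) x : qform (a *: A) x = a * qform A x.
Proof. by rewrite /qform -scalemxAr -scalemxAl mxE. Qed.

Lemma qform_scalar k a (x : 'rV[R]_k) : qform a%:M x = a * sqnorm x.
Proof. by rewrite -scalemx1 qformZl sqnorm_qform. Qed.

Lemma qform_mulmx p k (A : 'M[R]_p) (M : 'M[R]_(p, k)) x :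
  qform (M^T *m A *m M) x = qform A (x *m M^T).
Proof. by rewrite /qform trmx_mul trmxK !mulmxA. Qed.

Lemma trmx_congruence p k (A : 'M[R]_p) (M : 'M[R]_(p, k)) :
  A^T = A -> (M^T *m A *m M)^T = M^T *m A *m M.
Proof. by move=> Asym; rewrite !trmx_mul trmxK Asym mulmxA. Qed.

Lemma qform_trmx_mul p k (M : 'M[R]_(p, k)) x :
  qform (M^T *m M) x = sqnorm (x *m M^T).
Proof. by rewrite sqnorm_qform -qform_mulmx mulmx1. Qed.

Lemma qform_eigen k (A : 'M[R]_k) a v : v *m A = a *: v -> qform A v = a * sqnorm v.
Proof. by move=> vA; rewrite /qform vA -scalemxAl mxE. Qed.

Lemma bform_sym k (A : 'M[R]_k) x y : A^T = A -> bform A y x = bform A x y.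
Proof.
move=> Asym; rewrite /bform.
have -> : y *m A *m x^T = (x *m A *m y^T)^T by rewrite !trmx_mul trmxK Asym mulmxA.
by rewrite mxE.
Qed.

Lemma qformDr k (A : 'M[R]_k) x y t : A^T = A ->
  qform A (x + t *: y) = qform A x + 2 * t * bform A x y + t ^+ 2 * qform A y.
Proof.
move=> Asym; have := bform_sym x y Asym.
rewrite /qform /bform linearD /= linearZ /= !mulmxDl !mulmxDr.
rewrite -!scalemxAl -!scalemxAr.
set xx := x *m A *m x^T; set xy := x *m A *m y^T; set yx := y *m A *m x^T.
set yy := y *m A *m y^T; rewrite !mxE => ->; ring.
Qed.

Lemma quadratic_ge0_linear_eq0 (b d : R) :
  (forall t, 0 <= 2 * t * b + t ^+ 2 * d) -> b = 0.
Proof.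
move=> ge0; pose s := 1 + `|d|.
have s_gt0 : 0 < s by rewrite ltr_wpDr.
have d_lt_s : d < s by rewrite (le_lt_trans (ler_norm d)) // ltrDr.
have := ge0 (- b / s); rewrite -(pmulr_rge0 _ (exprn_gt0 2 s_gt0)).
have -> : s ^+ 2 * (2 * (- b / s) * b + (- b / s) ^+ 2 * d) = b ^+ 2 * (d - 2 * s).
  by field; rewrite gt_eqF.
move=> h; apply/eqP; rewrite -sqrf_eq0 eq_le sqr_ge0 andbT; nra.
Qed.

Lemma psd_qform_eq0 k (B : 'M[R]_k) c : B^T = B -> (forall y, 0 <= qform B y) ->
  qform B c = 0 -> c *m B = 0.
Proof.
move=> Bsym Bpsd Bc0; apply/eqP; rewrite -sqnorm_eq0.
suff Bc_orth y : bform B c y = 0.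
  by rewrite -[sqnorm _]/(bform B c (c *m B)) Bc_orth.
apply: (quadratic_ge0_linear_eq0 (d := qform B y)) => t.
by have := Bpsd (c + t *: y); rewrite qformDr // Bc0 add0r.
Qed.

Lemma qform_max_eigenvector k (A : 'M[R]_k) a c : A^T = A ->
  (forall y, qform A y <= a * sqnorm y) -> qform A c = a * sqnorm c ->
  c *m A = a *: c.
Proof.
move=> Asym Ale Ac; set B := a%:M - A.
have qB y : qform B y = a * sqnorm y - qform A y.
  by rewrite /B qformDl -scaleN1r qformZl qform_scalar mulN1r.
have Bsym : B^T = B by rewrite linearB /= tr_scalar_mx Asym.
have Bpsd y : 0 <= qform B y by rewrite qB subr_ge0.
have /eqP : c *m B = 0 by apply: psd_qform_eq0 Bsym Bpsd _; rewrite qB Ac subrr.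
by rewrite mulmxBr mul_mx_scalar subr_eq0 => /eqP <-.
Qed.

Lemma qform_continuous k (A : 'M[R]_k) : continuous (qform A).
Proof.
have -> : qform A = fun x => \sum_j (\sum_i x 0 i * A i j) * x 0 j.
  by apply/funext => x; rewrite /qform mxE; apply: eq_bigr => j _; rewrite !mxE.
apply: continuous_big; first exact: add_continuous.
move=> j _ x; apply: continuousM; last exact: coord_continuous.
apply: continuous_big x; first exact: add_continuous.
move=> i _ x; apply: continuousM; first exact: coord_continuous.
exact: cst_continuous.
Qed.

Lemma exists_qform_max_sphere k (A : 'M[R]_k.+1) :
  exists2 c, sqnorm c = 1 & forall y, sqnorm y = 1 -> qform A y <= qform A c.
Proof.
pose sphere := [set x : 'rV[R]_k.+1 | sqnorm x = 1].
have sphere0 : sphere !=set0.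
  exists (delta_mx 0 0).
  by rewrite /sphere /= /sqnorm trmx_delta mul_delta_mx mxE !eqxx.
have sphere_closed : closed sphere.
  rewrite (_ : sphere = @sqnorm k.+1 @^-1` [set 1]) //.
  apply: preimage_closed; last exact: closed_eq.
  move=> x _.
  have -> : @sqnorm k.+1 = qform 1%:M by apply/funext => y; rewrite sqnorm_qform.
  exact: qform_continuous.
have sphere_bounded : bounded_set sphere.
  exists 1; split => // M M_gt1 x x1; rewrite /Num.Def.normr /= mx_normrE.
  apply: bigmax_le => [|[i j] _ /=]; first lra.
  rewrite ord1 (le_trans _ (ltW M_gt1)) // -(@ler_pXn2r _ 2) ?nnegrE //.
  by rewrite real_normK ?num_real // expr1n -x1 sqr_coord_le_sqnorm.
have [c c1 cmax] := compact_EVT_max sphere0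
  (bounded_closed_compact sphere_bounded sphere_closed)
  (continuous_subspaceT (@qform_continuous _ A)).
by exists c => [|y y1]; [move: c1; rewrite inE | apply: cmax; rewrite inE].
Qed.

Lemma exists_qform_max k (A : 'M[R]_k.+1) :
  exists2 c, sqnorm c = 1 & forall y, qform A y <= qform A c * sqnorm y.
Proof.
have [c c1 cmax] := exists_qform_max_sphere A; exists c => // y.
have [->|y0] := eqVneq y 0; first by rewrite /qform /sqnorm !mul0mx !mxE mulr0.
have y_gt0 : 0 < sqnorm y by rewrite sqnorm_gt0.
pose t := (Num.sqrt (sqnorm y))^-1.
have t2y : t ^+ 2 * sqnorm y = 1.
  by rewrite exprVn sqr_sqrtr ?sqnorm_ge0 // mulVf ?gt_eqF.
have := cmax (t *: y); rewrite sqnormZ qformZr => /(_ t2y) /(ler_wpM2r (ltW y_gt0)).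
by rewrite mulrAC t2y mul1r.
Qed.

Lemma exists_max_eigenvalue k (A : 'M[R]_k.+1) : A^T = A ->
  exists2 a, eigenvalue A a & forall y, qform A y <= a * sqnorm y.
Proof.
move=> Asym; have [c c1 cmax] := exists_qform_max A.
exists (qform A c) => //; apply/eigenvalueP; exists c.
  by apply: qform_max_eigenvector; rewrite // c1 mulr1.
by rewrite -sqnorm_eq0 c1 oner_eq0.
Qed.

Lemma eigenvalue_le k (A : 'M[R]_k) a b :
  (forall y, qform A y <= b * sqnorm y) -> eigenvalue A a -> a <= b.
Proof.
move=> Ale /eigenvalueP [v vA v0].
by rewrite -(ler_pM2r (_ : 0 < sqnorm v)) ?sqnorm_gt0 // -(qform_eigen vA).
Qed.

Lemma eigenvalue_ge k (A : 'M[R]_k) a b :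
  (forall y, b * sqnorm y <= qform A y) -> eigenvalue A a -> b <= a.
Proof.
move=> Age /eigenvalueP [v vA v0].
by rewrite -(ler_pM2r (_ : 0 < sqnorm v)) ?sqnorm_gt0 // -(qform_eigen vA).
Qed.

Lemma lambda_max_eq k (A : 'M[R]_k) a : eigenvalue A a ->
  (forall y, qform A y <= a * sqnorm y) -> lambda_max A = a.
Proof.
move=> Aa Ale; have spec_le b : spectrum A b -> b <= a by exact: eigenvalue_le.
apply/eqP; rewrite eq_le ge_sup //=; last by exists a.
by rewrite sup_upper_bound //; split; exists a.
Qed.

Section SymmetricMatrix.
Variables (k : nat) (A : 'M[R]_k.+1).
Hypothesis Asym : A^T = A.

Lemma eigenvalue_lambda_max : eigenvalue A (lambda_max A).
Proof.
by have [a Aa Ale] := exists_max_eigenvalue Asym; rewrite (lambda_max_eq Aa Ale).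
Qed.

Lemma qform_le_lambda_max y : qform A y <= lambda_max A * sqnorm y.
Proof.
by have [a Aa Ale] := exists_max_eigenvalue Asym; rewrite (lambda_max_eq Aa Ale).
Qed.

Lemma lambda_max_ge0 : (forall y, 0 <= qform A y) -> 0 <= lambda_max A.
Proof.
by move=> Apsd; apply: eigenvalue_ge eigenvalue_lambda_max => y; rewrite mul0r.
Qed.

End SymmetricMatrix.

Lemma sqnorm_mul_trmx_le p r (M : 'M[R]_(p, r.+1)) c : 0 <= c ->
  (forall w, qform (M *m M^T) w <= c * sqnorm w) ->
  forall v, sqnorm (v *m M^T) <= c * sqnorm v.
Proof.
move=> c0 MMt_le v.
have MtM_sym : (M^T *m M)^T = M^T *m M by rewrite trmx_mul trmxK.
have [mu /eigenvalueP [z zMtM z0] MtM_le] := exists_max_eigenvalue MtM_sym.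
suff mu_le_c : mu <= c.
  by rewrite -qform_trmx_mul (le_trans (MtM_le v)) // ler_wpM2r ?sqnorm_ge0.
have [zMt0|zMt0] := eqVneq (z *m M^T) 0.
  have : mu * sqnorm z = 0.
    rewrite -(qform_eigen zMtM) qform_trmx_mul zMt0.
    by apply/eqP; rewrite sqnorm_eq0.
  by move/eqP; rewrite mulf_eq0 sqnorm_eq0 (negbTE z0) orbF => /eqP ->.
apply: eigenvalue_le MMt_le _; apply/eigenvalueP; exists (z *m M^T) => //.
by rewrite mulmxA -(mulmxA z) zMtM scalemxAl.
Qed.

Lemma cond_num_le_ratio k (A : 'M[R]_k.+1) a b : A^T = A -> 0 < a ->
  (forall y, a * sqnorm y <= qform A y) -> (forall y, qform A y <= b * sqnorm y) ->
  1 <= cond_num A /\ cond_num A <= b / a.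
Proof.
move=> Asym a_gt0 Age Ale; have Amax := eigenvalue_lambda_max Asym.
have spec_ge c : spectrum A c -> a <= c by exact: eigenvalue_ge.
have a_le_min : a <= lambda_min A.
  by apply: lb_le_inf; first by exists (lambda_max A).
have min_le_max : lambda_min A <= lambda_max A by apply: ge_inf => //; exists a.
have max_le_b : lambda_max A <= b := eigenvalue_le Ale Amax.
have min_gt0 : 0 < lambda_min A := lt_le_trans a_gt0 a_le_min.
rewrite /cond_num ler_pdivlMr // mul1r; split => //.
rewrite ler_pdivrMr // mulrAC ler_pdivlMr //; nra.
Qed.

Lemma spd_qform_ge0 k (A : 'M[R]_k) y : spd_mx A -> 0 <= qform A y.
Proof.
move=> [_ Apos]; have [->|y0] := eqVneq y 0; first by rewrite /qform !mul0mx mxE.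
by have := Apos y^T; rewrite trmx_eq0 trmxK => /(_ y0) /ltW.
Qed.

Lemma spd_unitmx k (A : 'M[R]_k) : spd_mx A -> A \in unitmx.
Proof.
move=> [_ Apos]; rewrite unitmxE unitfE; apply/det0P => -[v v0 vA].
by have := Apos v^T; rewrite trmx_eq0 trmxK vA mul0mx mxE ltxx => /(_ v0).
Qed.

Lemma spd_qform_invmx_ge0 k (A : 'M[R]_k) y : spd_mx A -> 0 <= qform (invmx A) y.
Proof.
move=> Aspd; have [Asym _] := Aspd.
have -> : invmx A = (invmx A)^T *m A *m invmx A.
  by rewrite trmx_inv Asym mulVmx ?mul1mx ?spd_unitmx.
by rewrite qform_mulmx spd_qform_ge0.
Qed.

End Rayleigh.

Theorem theorem6 (R : realType) (n m q : nat) (beta : R)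
  (B0 U : 'M[R]_n.+1) (Xf : 'M[R]_(n.+1, m.+1))
  (Hhat : 'M[R]_(q.+1, n.+1)) (Rhat : 'M[R]_q.+1) :
  0 <= beta <= 1 ->
  spd_mx B0 ->
  spd_mx U -> U *m U = B0 ->
  spd_mx Rhat ->
  let Pf := Xf *m Xf^T in
  let K := Hhat^T *m invmx Rhat *m Hhat in
  let Uh := row_mx (Num.sqrt (1 - beta) *: U) (Num.sqrt beta *: Xf) in
  let S := 1%:M + Uh^T *m K *m Uh in
  1 <= cond_num S /\
  cond_num S <=
    1 + ((1 - beta) * lambda_max B0 + beta * lambda_max Pf) * lambda_max K.
Proof.
move=> /andP[beta_ge0 beta_le1] B0spd [Usym _] UUB0 Rhat_spd Pf K Uh S.
have B0sym : B0^T = B0 := B0spd.1.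
have Rinv_sym : (invmx Rhat)^T = invmx Rhat by rewrite trmx_inv Rhat_spd.1.
have Ksym : K^T = K := trmx_congruence Hhat Rinv_sym.
have Kpsd w : 0 <= qform K w by rewrite qform_mulmx spd_qform_invmx_ge0.
have Pfsym : Pf^T = Pf by rewrite /Pf trmx_mul trmxK.
have Pfpsd w : 0 <= qform Pf w.
  by rewrite /Pf -{1}[Xf]trmxK qform_trmx_mul sqnorm_ge0.
have B0psd w : 0 <= qform B0 w by apply: spd_qform_ge0.
set C := (1 - beta) * lambda_max B0 + beta * lambda_max Pf.
have C_ge0 : 0 <= C by rewrite addr_ge0 ?mulr_ge0 ?subr_ge0 ?lambda_max_ge0.
have UhUht : Uh *m Uh^T = (1 - beta) *: B0 + beta *: Pf.
  rewrite /Uh tr_row_mx mul_row_col !linearZ /= -!scalemxAl !scalerA -!expr2.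
  by rewrite !sqr_sqrtr ?subr_ge0 // Usym UUB0.
have Uht_le : forall v, sqnorm (v *m Uh^T) <= C * sqnorm v.
  apply: (@sqnorm_mul_trmx_le _ _ (n + m.+1) Uh C C_ge0) => w.
  rewrite UhUht qformDl !qformZl [X in _ <= X]mulrDl -!mulrA.
  by rewrite lerD // ler_wpM2l ?subr_ge0 // qform_le_lambda_max.
have Ssym : S^T = S by rewrite /S linearD /= tr_scalar_mx trmx_congruence.
have qS v : qform S v = sqnorm v + qform K (v *m Uh^T).
  by rewrite /S qformDl qform_scalar mul1r qform_mulmx.
have [] := cond_num_le_ratio (a := 1) (b := 1 + C * lambda_max K) Ssym ltr01.
- by move=> v; rewrite qS mul1r lerDl.
- move=> v; rewrite qS mulrDl mul1r lerD2l -mulrA mulrCA.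
  apply: le_trans (qform_le_lambda_max Ksym _) _.
  by rewrite ler_wpM2l ?lambda_max_ge0.
by rewrite divr1.
Qed.
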